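(* Let $N\ge1$, let the parameter space $\Theta$ of the correlated Bernoulli random graph model be nondegenerate, let $g:\Theta\to\mathbb{R}$, and let $S:\mathcal{X}\to\mathbb{R}$ be an unbiased estimator of $g(\theta)$. Then there exists a uniformly minimum variance unbiased (UMVU) estimator of $g(\theta)$, and in fact $\overline{S}$ is the UMVU estimator of $g(\theta)$.
   Context: Correlated Bernoulli random graph model: fix a positive integer $N$ and let $\mathcal{R}=\{(p_1,\dots,p_N,\varrho_1,\dots,\varrho_N): p_i,\varrho_i\in[0,1]\}$. A parameter space is any subset $\Theta\subseteq\mathcal{R}$. For $\theta\in\Theta$, the random vectors $X,Y\in\{0,1\}^N$ are such that the pairs $(X_i,Y_i)$ are independent across $i$; $X_i,Y_i$ are each marginally Bernoulli$(p_i)$ with Pearson correlation $\varrho_i$ (so $\mathbb{P}(X_i=Y_i=1)=p_i^2+\varrho_ip_i(1-p_i)$, $\mathbb{P}(X_i=Y_i=0)=(1-p_i)^2+\varrho_ip_i(1-p_i)$, $\mathbb{P}(X_i=1,Y_i=0)=\mathbb{P}(X_i=0,Y_i=1)=(1-\varrho_i)p_i(1-p_i)$). Sample space $\mathcal{X}=\{(x,y):x,y\in\{0,1\}^N\}$; an estimator/statistic is a function $\mathcal{X}\to\mathbb{R}$, unbiased for $g$ if $\mathbb{E}_\theta S=g(\theta)$ for all $\theta\in\Theta$. Let $\mathcal{R}^o=\{(p_1,\dots,p_N,0,\dots,0):p_i\in\mathbb{R}\}$; $\Theta$ is nondegenerate if $\Theta\cap\mathcal{R}^o$ has an interior point relative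 to $\mathcal{R}^o$. The disagreement vector $\mathcal{H}:\mathcal{X}\to\{0,\star,1\}^N$ has $i$th component $1$ if $x_i=y_i=1$, $0$ if $x_i=y_i=0$, $\star$ if $x_i\neq y_i$; $\mathcal{X}_h=\mathcal{H}^{-1}(h)$. The balanced variant of $S$ is $\overline{S}(x,y)=\frac{1}{|\mathcal{X}_h|}\sum_{(x',y')\in\mathcal{X}_h}S(x',y')$ with $h=\mathcal{H}(x,y)$. *)

From HB Require Import structures.
From mathcomp Require Import all_boot all_order all_algebra.
Set Implicit Arguments. Unset Strict Implicit. Unset Printing Implicit Defensive.
Import Order.TTheory GRing.Theory Num.Theory.
Local Open Scope ring_scope.

Section CBRG.
Variables (R : realFieldType) (N : nat).

(* A parameter theta = (p, rho), with p, rho : 'I_N -> R. *)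
Definition param := (('I_N -> R) * ('I_N -> R))%type.

Definition in_Rfull (th : param) : Prop :=
  forall i, 0 <= th.1 i <= 1 /\ 0 <= th.2 i <= 1.

(* sample space \mathcal{X} = {(x,y) : x,y in {0,1}^N}  (true = 1) *)
Definition outcome := ({ffun 'I_N -> bool} * {ffun 'I_N -> bool})%type.

Definition pair_prob (p r : R) (a b : bool) : R :=
  match a, b with
  | true, true => p ^+ 2 + r * p * (1 - p)
  | false, false => (1 - p) ^+ 2 + r * p * (1 - p)
  | _, _ => (1 - r) * p * (1 - p)
  end.

Definition prob (th : param) (w : outcome) : R :=
  \prod_(i < N) pair_prob (th.1 i) (th.2 i) (w.1 i) (w.2 i).

Definition expect (th : param) (S : outcome -> R) : R :=
  \sum_(w : outcome) prob th w * S w.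

Definition variance (th : param) (S : outcome -> R) : R :=
  expect th (fun w => (S w - expect th S) ^+ 2).

Definition unbiased (Theta : param -> Prop) (g : param -> R)
  (S : outcome -> R) : Prop :=
  forall th, Theta th -> expect th S = g th.

Definition UMVU (Theta : param -> Prop) (g : param -> R)
  (S : outcome -> R) : Prop :=
  unbiased Theta g S /\
  forall T : outcome -> R, unbiased Theta g T ->
    forall th, Theta th -> variance th S <= variance th T.

(* nondegenerate: Theta \cap R^o has an interior point relative to
   R^o = {(p,0)} ~ R^N (interior w.r.t. the standard topology of R^N,
   written with sup-norm balls) *)
Definition nondegenerate_space (Theta : param -> Prop) : Prop :=
  exists (p0 : 'I_N -> R) (eps : R), 0 < eps /\
    forall p : 'I_N -> R, (forall i, `|p i - p0 i| < eps) ->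
      Theta (p, fun _ => 0).

(* disagreement vector: Some b if x_i = y_i = b, None (= star) if x_i <> y_i *)
Definition disagree (w : outcome) : {ffun 'I_N -> option bool} :=
  [ffun i => if w.1 i == w.2 i then Some (w.1 i) else None].

Definition balanced (S : outcome -> R) (w : outcome) : R :=
  (#|[set w' : outcome | disagree w' == disagree w]|%:R)^-1 *
  \sum_(w' : outcome | disagree w' == disagree w) S w'.

End CBRG.

(* Rao-Blackwell plus Lehmann-Scheffe for the statistic H = disagree.  The law of
   (X, Y) weights an outcome only through its disagreement vector, so averaging a
   statistic over the fibers of H keeps every expectation and, since the residual
   is orthogonal to all fiberwise constant functions, can only lower the variance.
   H is complete on the nondegenerate slice rho = 0: there a cell has probability
   p (1 - p), p ^ 2 or (1 - p) ^ 2, three linearly independent quadratics in p, so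
   on the product grid of three values of p_i per coordinate inside the ball the
   expectations determine all fiber sums.  Hence every unbiased estimator has the
   same balanced variant, which is therefore of minimal variance. *)

From mathcomp Require Import all_boot all_order all_algebra.
From mathcomp Require Import ring lra.
Set Implicit Arguments. Unset Strict Implicit. Unset Printing Implicit Defensive.
Import Order.TTheory GRing.Theory Num.Theory.
Local Open Scope ring_scope.

Section FiberMean.
Variables (R : realFieldType) (W : finType) (Y : eqType) (H : W -> Y).

Definition fiber_mean (T : W -> R) (w : W) : R :=
  (#|[set w' | H w' == H w]|%:R)^-1 * \sum_(w' | H w' == H w) T w'.

Definition fiberwise_constant (K : W -> R) := forall w w', H w = H w' -> K w = K w'.

Lemma fiber_mean_fiberwise_constant T : fiberwise_constant (fiber_mean T).
Proof. by move=> w w' Hww'; rewrite /fiber_mean Hww'. Qed.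

Lemma sum_mul_fiber_mean (K T : W -> R) :
  fiberwise_constant K -> \sum_w K w * fiber_mean T w = \sum_w K w * T w.
Proof.
move=> K_const; pose n w := #|[set w' | H w' == H w]|%:R : R.
have n_neq0 w : n w != 0.
  by rewrite pnatr_eq0 -lt0n card_gt0; apply/set0Pn; exists w; rewrite inE.
transitivity (\sum_w' \sum_(w | H w == H w') K w' * (n w')^-1 * T w').
  rewrite (exchange_big_dep predT) //=; apply: eq_bigr => w _.
  rewrite /fiber_mean mulrA big_distrr /=; apply: eq_big => [w'|w' /eqP Hw'].
    exact: eq_sym.
  by rewrite (K_const _ _ Hw') /n Hw'.
apply: eq_bigr => w' _.
by rewrite sumr_const -mulr_natr -cardsE mulrAC mulfVK.
Qed.

Lemma fiber_mean_sqr_le (mu T : W -> R) (m : R) :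
  (forall w, 0 <= mu w) -> fiberwise_constant mu ->
  \sum_w mu w * (fiber_mean T w - m) ^+ 2 <= \sum_w mu w * (T w - m) ^+ 2.
Proof.
move=> mu_ge0 mu_const; pose c w := 2 * mu w * (fiber_mean T w - m).
have c_const : fiberwise_constant c.
  by move=> w w' Hww'; rewrite /c (mu_const _ _ Hww') (fiber_mean_fiberwise_constant T Hww').
rewrite -subr_ge0 -sumrB.
have split_sqr w : mu w * (T w - m) ^+ 2 - mu w * (fiber_mean T w - m) ^+ 2 =
    mu w * (T w - fiber_mean T w) ^+ 2 + c w * T w - c w * fiber_mean T w.
  by rewrite /c; ring.
under eq_bigr => w _ do rewrite split_sqr.
rewrite sumrB big_split /= sum_mul_fiber_mean // addrK.
by apply: sumr_ge0 => w _; rewrite mulr_ge0 ?sqr_ge0.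
Qed.

End FiberMean.

Definition kernel_injective (R : pzSemiRingType) (T : finType) (K : T -> T -> R) :=
  forall v : T -> R, (forall o, \sum_u K o u * v u = 0) -> forall u, v u = 0.

Section TensorKernel.
Variables (R : comPzRingType) (I T : finType) (K : I -> T -> T -> R).
Hypothesis K_inj : forall i, kernel_injective (K i).
Variable c : {ffun I -> T} -> R.

Let upd (s : {ffun I -> T}) j u : {ffun I -> T} := [ffun i => if i == j then u else s i].

Let factor (A : {set I}) (s h : {ffun I -> T}) i : R :=
  if i \in A then K i (s i) (h i) else (h i == s i)%:R.

(* partial setT is the full tensor kernel and partial set0 the identity; coordinates
   leave A one at a time, each step inverting a single injective kernel. *)
Let partial A (s : {ffun I -> T}) := \sum_h (\prod_i factor A s h i) * c h.

Let partial0 s : partial set0 s = c s.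
Proof.
rewrite /partial (bigD1 s) //= big1 => [|i _]; last by rewrite /factor inE eqxx.
rewrite mul1r big1 ?addr0 // => h h_neq_s.
have [i hi_neq] : exists i, h i != s i.
  apply/existsP; apply: contraNT h_neq_s => /existsPn eq_hs.
  by apply/eqP/ffunP => i; apply/eqP/negPn.
by rewrite (bigD1 i) //= /factor inE (negbTE hi_neq) !mul0r.
Qed.

Let partialU1 (A : {set I}) j s : j \notin A ->
  partial (j |: A) s = \sum_u K j (s j) u * partial A (upd s j u).
Proof.
move=> jA; rewrite /partial.
under [RHS]eq_bigr => u _ do rewrite big_distrr.
rewrite exchange_big; apply: eq_bigr => h _ /=.
have other_factors u : \prod_(i | i != j) factor A (upd s j u) h i =
                       \prod_(i | i != j) factor (j |: A) s h i.
  by apply: eq_bigr => i /negbTE ij; rewrite /factor !ffunE in_setU1 ij.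
under [RHS]eq_bigr => u _ do rewrite (bigD1 j) //= other_factors.
rewrite (bigD1 j) //= -mulrA.
under [RHS]eq_bigr => u _ do rewrite -mulrA mulrA.
rewrite -big_distrl /=; congr (_ * _).
rewrite /factor setU11 (negbTE jA).
under eq_bigr => u _ do rewrite ffunE eqxx.
rewrite (bigD1 (h j)) //= eqxx mulr1 big1 ?addr0 // => u /negbTE hu.
by rewrite eq_sym hu mulr0.
Qed.

Let partial_descent (A : {set I}) j : j \notin A ->
  (forall s, partial (j |: A) s = 0) -> forall s, partial A s = 0.
Proof.
move=> jA partial_eq0 s.
have upd_id : upd s j (s j) = s by apply/ffunP => i; rewrite ffunE; case: eqP => // ->.
have updK o u : upd (upd s j o) j u = upd s j u.
  by apply/ffunP => i; rewrite !ffunE; case: eqP.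
rewrite -upd_id; apply: (K_inj (v := fun u => partial A (upd s j u))) => o.
rewrite -[RHS](partial_eq0 (upd s j o)) partialU1 // ffunE eqxx.
by apply: eq_bigr => u _; rewrite updK.
Qed.

Lemma tensor_kernel_injective :
  (forall s : {ffun I -> T}, \sum_(h : {ffun I -> T}) (\prod_i K i (s i) (h i)) * c h = 0) ->
  forall h, c h = 0.
Proof.
move=> full_eq0 h; rewrite -partial0.
suff partial_eq0 n A : #|~: A| = n -> forall s, partial A s = 0 by exact: partial_eq0.
elim: n A => [|n IHn] A cardA s.
  rewrite -[A]setCK (cards0_eq cardA) setC0 -[RHS](full_eq0 s).
  by apply: eq_bigr => h' _; congr (_ * _); apply: eq_bigr => i _; rewrite /factor inE.
have [j] : exists j, j \in ~: A by apply/set0Pn; rewrite -card_gt0 cardA.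
rewrite inE => jA; apply: (partial_descent jA) => {}s; apply: IHn.
by move: cardA; rewrite (cardsD1 j) inE jA setCU setIC -setDE add1n => -[].
Qed.

End TensorKernel.

Lemma sum_option_bool (R : nmodType) (F : option bool -> R) :
  \sum_u F u = F None + F (Some true) + F (Some false).
Proof.
rewrite (bigD1 None) // (bigD1 (Some true)) // (bigD1 (Some false)) //=.
by rewrite big1 ?addr0 ?addrA // => -[[]|].
Qed.

Lemma quadratic_coef_eq0 (R : numFieldType) (c0 c1 c2 a d : R) :
  let q x := c0 + c1 * x + c2 * x ^+ 2 in
  d != 0 -> q (a - d) = 0 -> q a = 0 -> q (a + d) = 0 -> [/\ c0 = 0, c1 = 0 & c2 = 0].
Proof.
move=> q d_neq0 q_minus q_mid q_plus.
have c2_eq0 : c2 = 0.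
  apply: (@mulIf _ (2 * d ^+ 2)); first by rewrite mulf_neq0 ?pnatr_eq0 ?expf_neq0.
  transitivity (q (a + d) + q (a - d) - 2 * q a); first by rewrite /q; ring.
  by rewrite q_minus q_mid q_plus; ring.
have c1_eq0 : c1 = 0.
  apply: (@mulIf _ (2 * d)); first by rewrite mulf_neq0 ?pnatr_eq0.
  transitivity (q (a + d) - q (a - d)); first by rewrite /q c2_eq0; ring.
  by rewrite q_minus q_plus; ring.
by split=> //; rewrite -q_mid /q c1_eq0 c2_eq0; ring.
Qed.

Section Model.
Variables (R : realFieldType) (N : nat).
Local Notation cell := {ffun 'I_N -> option bool}.

Definition cell_prob (p r : R) (u : option bool) : R :=
  if u is Some b then pair_prob p r b b else pair_prob p r true false.

Lemma prob_disagree (th : param R N) w :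
  prob th w = \prod_i cell_prob (th.1 i) (th.2 i) (disagree w i).
Proof. by apply: eq_bigr => i _; rewrite ffunE; case: (w.1 i); case: (w.2 i). Qed.

Lemma prob_fiberwise_constant (th : param R N) :
  fiberwise_constant (@disagree N) (prob th).
Proof. by move=> w w' ww'; rewrite !prob_disagree ww'. Qed.

Lemma prob_ge0 (th : param R N) w : in_Rfull th -> 0 <= prob th w.
Proof.
move=> th_in; apply: prodr_ge0 => i _.
case: (th_in i) => /andP[p_ge0 p_le1] /andP[r_ge0 r_le1].
have q_ge0 : 0 <= 1 - th.1 i by lra.
have s_ge0 : 0 <= 1 - th.2 i by lra.
by case: (w.1 i); case: (w.2 i); rewrite /pair_prob ?addr_ge0 ?mulr_ge0 ?sqr_ge0.
Qed.

Lemma eq_expect (th : param R N) (T1 T2 : outcome N -> R) :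
  T1 =1 T2 -> expect th T1 = expect th T2.
Proof. by move=> T12; apply: eq_bigr => w _; rewrite T12. Qed.

Lemma eq_variance (th : param R N) (T1 T2 : outcome N -> R) :
  T1 =1 T2 -> variance th T1 = variance th T2.
Proof.
by move=> T12; rewrite /variance (eq_expect th T12); apply: eq_expect => w; rewrite T12.
Qed.

Lemma expectB (th : param R N) (T1 T2 : outcome N -> R) :
  expect th (fun w => T1 w - T2 w) = expect th T1 - expect th T2.
Proof. by rewrite /expect -sumrB; apply: eq_bigr => w _; rewrite mulrBr. Qed.

Lemma expect_balanced (th : param R N) T : expect th (balanced T) = expect th T.
Proof. exact: sum_mul_fiber_mean (prob_fiberwise_constant th). Qed.

Lemma variance_balanced_le (th : param R N) T :
  in_Rfull th -> variance th (balanced T) <= variance th T.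
Proof.
move=> th_in; rewrite /variance expect_balanced.
by apply: fiber_mean_sqr_le (prob_fiberwise_constant th) => w; apply: prob_ge0.
Qed.

Lemma expect_by_cells (th : param R N) F :
  expect th F = \sum_(h : cell) (\prod_i cell_prob (th.1 i) (th.2 i) (h i)) *
                                \sum_(w | disagree w == h) F w.
Proof.
rewrite /expect (partition_big (@disagree N) predT) //=; apply: eq_bigr => h _.
by rewrite big_distrr; apply: eq_bigr => w /eqP <-; rewrite prob_disagree.
Qed.

Definition grid_shift (u : option bool) : R :=
  match u with None => 0 | Some true => 1 | Some false => -1 end.

Lemma cell_kernel_injective (a d : R) :
  d != 0 -> kernel_injective (fun o u => cell_prob (a + grid_shift o * d) 0 u).
Proof.
move=> d_neq0 v v_eq0.
pose q x := v (Some false) + (v None - 2 * v (Some false)) * x +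
            (v (Some true) + v (Some false) - v None) * x ^+ 2.
have kernel_q x : \sum_u cell_prob x 0 u * v u = q x.
  by rewrite sum_option_bool /= /q; ring.
have := v_eq0 None; have := v_eq0 (Some true); have := v_eq0 (Some false).
rewrite !kernel_q /= mul0r addr0 mul1r mulN1r => q_minus q_plus q_mid.
have [vF_eq0 c1_eq0 c2_eq0] := quadratic_coef_eq0 d_neq0 q_minus q_mid q_plus.
have vN_eq0 : v None = 0 by move: c1_eq0; rewrite vF_eq0 mulr0 subr0.
by case=> [[]|] //; move: c2_eq0; rewrite vF_eq0 vN_eq0 !subr0 addr0.
Qed.

Lemma disagree_fiber_sum_eq0 (p0 : 'I_N -> R) (d : R) (F : outcome N -> R) : d != 0 ->
  (forall s : cell, expect (fun i => p0 i + grid_shift (s i) * d, fun _ => 0) F = 0) ->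
  forall h : cell, \sum_(w | disagree w == h) F w = 0.
Proof.
move=> d_neq0 F_eq0.
apply: (tensor_kernel_injective (K := fun i o u => cell_prob (p0 i + grid_shift o * d) 0 u)).
  by move=> i; apply: cell_kernel_injective.
by move=> s; rewrite -[RHS](F_eq0 s) expect_by_cells.
Qed.

Lemma unbiased_balanced_eq (Theta : param R N -> Prop) g T1 T2 :
  nondegenerate_space Theta -> unbiased Theta g T1 -> unbiased Theta g T2 ->
  balanced T1 =1 balanced T2.
Proof.
case=> p0 [eps [eps_gt0 ball_sub]] T1_unb T2_unb w.
have d_neq0 : eps / 2 != 0 by rewrite lt0r_neq0 // divr_gt0.
rewrite /balanced; congr (_ * _); apply/eqP; rewrite -subr_eq0 -sumrB; apply/eqP.
apply: (@disagree_fiber_sum_eq0 p0 _ (fun w => T1 w - T2 w) d_neq0) => s.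
have grid_in : Theta (fun i => p0 i + grid_shift (s i) * (eps / 2), fun _ => 0).
  apply: ball_sub => i; rewrite addrAC subrr add0r.
  by case: (s i) => [[]|] /=; rewrite ?mul0r ?mul1r ?mulN1r ?normrN ?normr0 ?gtr0_norm; lra.
by rewrite expectB (T1_unb _ grid_in) (T2_unb _ grid_in) subrr.
Qed.

End Model.

Theorem theorem3 (R : realFieldType) (N : nat) (HN : (0 < N)%N)
  (Theta : param R N -> Prop)
  (HTheta : forall th, Theta th -> in_Rfull th)
  (Hnd : nondegenerate_space Theta)
  (g : param R N -> R) (S : outcome N -> R)
  (HS : unbiased Theta g S) :
  (exists U : outcome N -> R, UMVU Theta g U) /\ UMVU Theta g (balanced S).
Proof.
have balanced_UMVU : UMVU Theta g (balanced S).
  split=> [th th_in | T T_unb th th_in]; first by rewrite expect_balanced HS.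
  rewrite (eq_variance th (unbiased_balanced_eq Hnd HS T_unb)).
  exact: variance_balanced_le (HTheta _ th_in).
by split; first exists (balanced S).
Qed.
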